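(* Let $N$ be a 2-step nilpotent real Lie group with a left-invariant pseudo-Riemannian metric $\langle\cdot,\cdot\rangle$ for which the center $\mathfrak z$ of its Lie algebra is nondegenerate. Then $N$ is of pseudo-$H$-type (of $H$-type when the metric is Riemannian) if and only if every nondegenerate semi-central plane has sectional curvature $K=\tfrac14$.
   Context: Put $\mathfrak v=\mathfrak z^\perp$. For $z\in\mathfrak z$ define $j(z)\in\mathrm{End}(\mathfrak v)$ by $\langle [x,y],z\rangle=\langle y,j(z)x\rangle$ for all $x,y\in\mathfrak v$. $N$ is of pseudo-$H$-type if $j(z)^2=-\langle z,z\rangle\,\mathrm{Id}_{\mathfrak v}$ for all $z\in\mathfrak z$; when the metric is Riemannian this is called $H$-type. A semi-central plane is a 2-plane spanned by a vector of $\mathfrak z$ and a vector of $\mathfrak v$; nondegenerate means the metric restricted to it is nondegenerate. Sectional curvature is that of the Levi-Civita connection. *)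

(* Left-invariant pseudo-Riemannian geometry of a Lie group
   reduced to its Lie algebra n = R^n ('rV[R]_n), metric given by a symmetric
   invertible Gram matrix G, Levi-Civita connection on left-invariant fields
   given by the Koszul formula. *)
From HB Require Import structures.
From mathcomp Require Import all_boot all_order all_algebra.
From mathcomp Require Import reals.
Set Implicit Arguments. Unset Strict Implicit. Unset Printing Implicit Defensive.
Import Order.TTheory GRing.Theory Num.Theory.
Local Open Scope ring_scope.

Section Defs.
Variables (R : realType) (n : nat).
Notation V := 'rV[R]_n.

Definition form (G : 'M[R]_n) (x y : V) : R := (x *m G *m y^T) 0 0.

Definition lie_bracket (br : V -> V -> V) : Prop :=
  [/\ forall (a : R) x y w, br (a *: x + y) w = a *: br x w + br y w,
      forall x y, br x y = - br y x &
      forall x y w, br x (br y w) + br y (br w x) + br w (br x y) = 0].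

Definition two_step_nilpotent (br : V -> V -> V) : Prop :=
  (forall x y w, br (br x y) w = 0) /\ (exists x y, br x y <> 0).

Definition pseudo_metric (G : 'M[R]_n) : Prop := G^T = G /\ G \in unitmx.

Definition in_center (br : V -> V -> V) (z : V) : Prop := forall x, br z x = 0.

Definition center_nondegenerate (br : V -> V -> V) (G : 'M[R]_n) : Prop :=
  forall z, in_center br z -> (forall z', in_center br z' -> form G z z' = 0) -> z = 0.

Definition in_v (br : V -> V -> V) (G : 'M[R]_n) (x : V) : Prop :=
  forall z, in_center br z -> form G x z = 0.

(* Riesz representative: the unique u with <u,w> = f w for linear f *)
Definition riesz (G : 'M[R]_n) (f : V -> R) : V :=
  (\row_i f (delta_mx (0 : 'I_1) i)) *m invmx G.

Definition jmap (br : V -> V -> V) (G : 'M[R]_n) (z x : V) : V :=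
  riesz G (fun w => form G (br x w) z).

Definition pseudo_H_type (br : V -> V -> V) (G : 'M[R]_n) : Prop :=
  forall z, in_center br z -> forall x, in_v br G x ->
    jmap br G z (jmap br G z x) = - (form G z z) *: x.

(* Levi-Civita connection on left-invariant fields (Koszul formula) *)
Definition nabla (br : V -> V -> V) (G : 'M[R]_n) (x y : V) : V :=
  riesz G (fun w => 2^-1 * (form G (br x y) w - form G (br y w) x + form G (br w x) y)).

Definition curv (br : V -> V -> V) (G : 'M[R]_n) (x y w : V) : V :=
  nabla br G x (nabla br G y w) - nabla br G y (nabla br G x w) - nabla br G (br x y) w.

Definition sec_curv (br : V -> V -> V) (G : 'M[R]_n) (x y : V) : R :=
  form G (curv br G x y y) x / (form G x x * form G y y - form G x y ^+ 2).

Definition lin_indep2 (x y : V) : Prop :=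
  forall a b : R, a *: x + b *: y = 0 -> a = 0 /\ b = 0.

Definition semicentral_curv_quarter (br : V -> V -> V) (G : 'M[R]_n) : Prop :=
  forall z x, in_center br z -> in_v br G x -> lin_indep2 z x ->
    form G z z * form G x x - form G z x ^+ 2 != 0 ->
    sec_curv br G z x = 4^-1.

End Defs.

(* For z central and x orthogonal to the center, the Koszul formula gives
   nabla_z = -1/2 j(z) and <nabla_x y, z> = 1/2 <j(z)x, y>, hence
   <R(z,x)x, z> = |j(z)x|^2 / 4 and K(z,x) = <j(z)x, j(z)x> / (4 <z,z> <x,x>).
   So K = 1/4 on the nondegenerate semi-central planes iff
   <j(z)x, j(z)x> = <z,z> <x,x> for non-null z and x.  The center and its
   orthogonal complement v are nondegenerate, so each is 0 or contains a
   non-null x0; for null x in it, x + t x0 is non-null for large t and the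
   defect of the identity at x + t x0 is affine in t, so it also vanishes at
   t = 0.  Polarizing the identity and using the skew-adjointness of j(z)
   gives j(z)^2 = -<z,z> on v. *)

From Pilot Require Import Defs.
From HB Require Import structures.
From mathcomp Require Import all_boot all_order all_algebra.
From mathcomp Require Import reals.
From mathcomp Require Import ring lra.
From Stdlib Require Import Classical_Prop.
Set Implicit Arguments.
Unset Strict Implicit.
Unset Printing Implicit Defensive.

Import Order.TTheory GRing.Theory Num.Theory.
Local Open Scope ring_scope.

Section RealQuadratics.
Variable R : realFieldType.

Lemma affine_eventually_eq0 (a b s : R) :
  (forall t, s < t -> a + t * b = 0) -> a = 0.
Proof.
move=> H; have H1 := H (s + 1) ltac:(lra); have H2 := H (s + 2) ltac:(lra).
have b0 : b = 0 by lra.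
by move: H1; rewrite b0 mulr0 addr0.
Qed.

Lemma quadratic_eventually_neq0 (b c : R) : c != 0 ->
  exists s, forall t, s < t -> t * b + t ^+ 2 * c != 0.
Proof.
move=> c0; exists `|b / c| => t lt_bt.
have t_gt0 : 0 < t by apply: le_lt_trans lt_bt.
have -> : t * b + t ^+ 2 * c = t * c * (b / c + t) by field.
have : - `|b / c| <= b / c by rewrite lerNl -normrN ler_norm.
by move=> ?; rewrite !mulf_neq0 // gt_eqF //; lra.
Qed.

End RealQuadratics.

Section RowVectors.
Variables (R : realType) (n : nat).
Notation V := 'rV[R]_n.

Definition subspace (S : V -> Prop) :=
  forall a x y, S x -> S y -> S (a *: x + y).

Lemma linear_row_sum_delta (W : lmodType R) (f : V -> W) : linear f ->
  forall u : V, f u = \sum_j u 0 j *: f (delta_mx 0 j).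
Proof.
move=> lin_f u.
pose F : {linear V -> W} := HB.pack f (GRing.isLinear.Build R V W *:%R f lin_f).
rewrite -[f u]/(F u) {1}(row_sum_delta u) linear_sum.
by apply: eq_bigr => j _; rewrite linearZ.
Qed.

Lemma linear_fun0 (W : lmodType R) (f : V -> W) : linear f -> f 0 = 0.
Proof.
by move=> lin_f; rewrite (linear_row_sum_delta lin_f) big1 // => j _; rewrite mxE scale0r.
Qed.

Lemma scalar_row_sum_delta (f : V -> R) : scalar f ->
  forall u : V, f u = \sum_j u 0 j * f (delta_mx 0 j).
Proof. exact: (@linear_row_sum_delta R^o). Qed.

Lemma mul_rV_lin1_linear (f : V -> V) : linear f -> forall u, u *m lin1_mx f = f u.
Proof.
move=> lin_f u.
pose F : {linear V -> V} := HB.pack f (GRing.isLinear.Build R V V *:%R f lin_f).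
exact: (mul_rV_lin1 F).
Qed.

End RowVectors.

Section Form.
Variables (R : realType) (n : nat) (G : 'M[R]_n).
Notation V := 'rV[R]_n.
Local Notation fm := (Defs.form G).

Definition nondegenerate_on (S : V -> Prop) :=
  forall x, S x -> (forall y, S y -> fm x y = 0) -> x = 0.

Lemma formDl x x' y : fm (x + x') y = fm x y + fm x' y.
Proof. by rewrite /Defs.form !mulmxDl mxE. Qed.
Lemma formZl a x y : fm (a *: x) y = a * fm x y.
Proof. by rewrite /Defs.form -!scalemxAl mxE. Qed.
Lemma formDr x y y' : fm x (y + y') = fm x y + fm x y'.
Proof. by rewrite /Defs.form linearD /= mulmxDr mxE. Qed.
Lemma formZr a x y : fm x (a *: y) = a * fm x y.
Proof. by rewrite /Defs.form linearZ /= -scalemxAr mxE. Qed.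
Lemma form0l y : fm 0 y = 0.
Proof. by rewrite -(scale0r 0) formZl mul0r. Qed.
Lemma formNl x y : fm (- x) y = - fm x y.
Proof. by rewrite -scaleN1r formZl mulN1r. Qed.
Lemma formBl x x' y : fm (x - x') y = fm x y - fm x' y.
Proof. by rewrite formDl formNl. Qed.

Lemma orthogonal_decomposition_mx (C : 'M[R]_n) :
  nondegenerate_on (fun u => (u <= C)%MS) ->
  forall w, exists2 c, (c <= C)%MS & forall u, (u <= C)%MS -> fm (w - c) u = 0.
Proof.
(* Nondegeneracy on C makes u |-> u *m P injective on C, so the row spaces
   of C *m P and P coincide; a preimage of w *m P gives the projection c. *)
move=> C_nondeg w; set P := G *m C^T.
have formE u u' : fm u u' = (u *m G *m u'^T) 0 0 by [].
have C_ker : (C :&: kermx P)%MS == 0.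
  apply/rowV0P => v; rewrite sub_capmx => /andP [vC /sub_kermxP vP].
  apply: C_nondeg => // _ /submxP [E ->].
  by rewrite formE trmx_mul mulmxA -(mulmxA v) vP mul0mx mxE.
have CP_rank : \rank (C *m P) = \rank C.
  by rewrite -(mxrank_mul_ker C P) (eqP C_ker) mxrank0 addn0.
have P_CP : (P <= C *m P)%MS.
  have [le_CP_P eq_CP_P] := mxrank_leqif_eq (submxMl C P : (C *m P <= P)%MS).
  have /andP [] // : (C *m P == P)%MS.
  by rewrite -eq_CP_P eqn_leq le_CP_P CP_rank -(mxrank_tr C) mxrankM_maxr.
have /submxP [D wPE] : (w *m P <= C *m P)%MS by apply: submx_trans (submxMl _ _) P_CP.
exists (D *m C) => [|_ /submxP [E ->]]; first exact: submxMl.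
rewrite formE trmx_mul mulmxA -(mulmxA (w - _)) mulmxBl -/P wPE.
by rewrite !mulmxA subrr mul0mx mxE.
Qed.

Hypothesis G_metric : pseudo_metric G.

Lemma formC x y : fm x y = fm y x.
Proof.
case: G_metric => G_sym _.
rewrite /Defs.form -[in LHS](trmxK (x *m G *m y^T)) [in LHS]mxE.
by rewrite !trmx_mul trmxK G_sym mulmxA.
Qed.

Lemma form_eq0 u : (forall w, fm u w = 0) -> u = 0.
Proof.
case: G_metric => _ G_unit u_orth.
have : u *m G = 0.
  apply/rowP => j; have := u_orth (delta_mx 0 j).
  by rewrite /Defs.form trmx_delta -colE !mxE.
by move=> /(congr1 (mulmx^~ (invmx G))); rewrite mulmxK // mul0mx.
Qed.

Lemma form_injl u u' : (forall w, fm u w = fm u' w) -> u = u'.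
Proof.
move=> eq_uu'; apply/eqP; rewrite -subr_eq0; apply/eqP/form_eq0 => w.
by rewrite formBl eq_uu' subrr.
Qed.

Lemma form_riesz f : scalar f -> forall w, fm (riesz G f) w = f w.
Proof.
case: G_metric => _ G_unit f_scalar w.
rewrite /Defs.form /riesz mulmxKV // mxE (scalar_row_sum_delta f_scalar w).
by apply: eq_bigr => j _; rewrite !mxE mulrC.
Qed.

Lemma form_addZ u v t :
  fm (u + t *: v) (u + t *: v) = fm u u + t * (2 * fm u v) + t ^+ 2 * fm v v.
Proof. by rewrite !(formDl, formDr, formZl, formZr) (formC v u); ring. Qed.

Lemma orthogonal_lin_indep2 x y :
  fm x y = 0 -> fm x x != 0 -> fm y y != 0 -> lin_indep2 x y.
Proof.
move=> xy0 xx0 yy0 a b /eqP; rewrite addr_eq0 => /eqP ab.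
have /eqP := congr1 (fm^~ x) ab; have /eqP := congr1 (fm^~ y) ab.
rewrite !(formZl, formNl) (formC y x) xy0 !mulr0 oppr0 eq_sym.
by rewrite oppr_eq0 !mulf_eq0 (negPf xx0) (negPf yy0) !orbF => /eqP -> /eqP.
Qed.

Lemma isotropic_subspace_eq0 S : subspace S -> nondegenerate_on S ->
  (forall x, S x -> fm x x = 0) -> forall x, S x -> x = 0.
Proof.
move=> S_sub S_nondeg S_null x Sx; apply: S_nondeg => // y Sy.
have := S_null _ (S_sub 1 _ _ Sy Sx); rewrite addrC form_addZ.
by rewrite S_null // S_null // expr1n !mul1r; lra.
Qed.

Section ScaledIsometry.
Variables (S : V -> Prop) (L : V -> V) (c : R).
Hypotheses (S_sub : subspace S) (L_lin : linear L).

Lemma scaled_isometry_of_nonnull : nondegenerate_on S ->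
  (forall x, S x -> fm x x != 0 -> fm (L x) (L x) = c * fm x x) ->
  forall x, S x -> fm (L x) (L x) = c * fm x x.
Proof.
move=> S_nondeg L_nonnull x Sx.
have [x_null | ] := eqVneq (fm x x) 0; last exact: L_nonnull.
have [[x0 [Sx0 x0_nonnull]] | S_null] := classic (exists x0, S x0 /\ fm x0 x0 != 0).
  have [s xt_nonnull] := quadratic_eventually_neq0 (2 * fm x x0) x0_nonnull.
  apply/eqP; rewrite -subr_eq0; apply/eqP.
  apply: (affine_eventually_eq0 (b := 2 * (fm (L x) (L x0) - c * fm x x0)) (s := s)).
  move=> t lt_st.
  have Sxt : S (x + t *: x0) by rewrite addrC; apply: S_sub.
  have Lxt : L (x + t *: x0) = L x + t *: L x0 by rewrite addrC L_lin addrC.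
  have := L_nonnull _ Sxt; rewrite Lxt !form_addZ (L_nonnull _ Sx0) // x_null add0r.
  by move=> /(_ (xt_nonnull t lt_st)); lra.
have -> : x = 0.
  apply: isotropic_subspace_eq0 Sx => // y Sy.
  by have [// | y_nonnull] := eqVneq (fm y y) 0; case: S_null; exists y.
by rewrite linear_fun0 // form0l mulr0.
Qed.

Lemma scaled_isometry_polarize :
  (forall x, S x -> fm (L x) (L x) = c * fm x x) ->
  forall x y, S x -> S y -> fm (L x) (L y) = c * fm x y.
Proof.
move=> L_iso x y Sx Sy.
have Sxy : S (x + 1 *: y) by rewrite addrC; apply: S_sub.
have Lxy : L (x + 1 *: y) = L x + 1 *: L y by rewrite addrC L_lin addrC.
have := L_iso _ Sxy; rewrite Lxy !form_addZ (L_iso _ Sx) (L_iso _ Sy).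
by rewrite expr1n !mul1r; lra.
Qed.
End ScaledIsometry.

End Form.

Section LieAlgebra.
Variables (R : realType) (n : nat) (br : 'rV[R]_n -> 'rV[R]_n -> 'rV[R]_n).
Variable G : 'M[R]_n.
Hypothesis br_lie : lie_bracket br.
Local Notation fm := (Defs.form G).
Local Notation j := (jmap br G).

Lemma linear_brl y : linear (br^~ y).
Proof. by case: br_lie => br_lin _ _ a x x'; apply: br_lin. Qed.

Lemma br_antisym x y : br x y = - br y x.
Proof. by case: br_lie => _ br_anti _; apply: br_anti. Qed.

Lemma linear_brr x : linear (br x).
Proof. by move=> a y y'; rewrite !(br_antisym x) linear_brl opprD scalerN. Qed.

Lemma in_center_r z : in_center br z -> forall x, br x z = 0.
Proof. by move=> z_center x; rewrite br_antisym z_center oppr0. Qed.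

Lemma center_subspace : subspace (in_center br).
Proof. by move=> a z z' zc z'c x; rewrite linear_brl zc z'c scaler0 addr0. Qed.

Definition center_mx : 'M[R]_n :=
  (\bigcap_(i < n) kermx (lin1_mx (br^~ (delta_mx 0 i))))%MS.

Lemma in_centerP z : in_center br z <-> (z <= center_mx)%MS.
Proof.
split=> [z_center | /sub_bigcapmxP z_ker x].
  apply/sub_bigcapmxP => i _; apply/sub_kermxP.
  by rewrite mul_rV_lin1_linear ?z_center //; apply: linear_brl.
rewrite (linear_row_sum_delta (linear_brr z) x) big1 // => i _.
have /sub_kermxP := z_ker i isT.
by rewrite mul_rV_lin1_linear => [->|]; [rewrite scaler0 | apply: linear_brl].
Qed.

Lemma v_subspace : subspace (in_v br G).
Proof. by move=> a x y xv yv z zc; rewrite formDl formZl xv // yv // mulr0 addr0. Qed.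

Lemma center_v_decomposition : center_nondegenerate br G ->
  forall w, exists2 c, in_center br c & in_v br G (w - c).
Proof.
move=> center_nondeg w.
have C_nondeg : nondegenerate_on G (fun u => (u <= center_mx)%MS).
  move=> u /in_centerP uc u_orth; apply: center_nondeg => // z' /in_centerP.
  exact: u_orth.
have [c /in_centerP cc c_orth] := orthogonal_decomposition_mx C_nondeg w.
by exists c => // z /in_centerP; apply: c_orth.
Qed.

Hypothesis G_metric : pseudo_metric G.

Lemma jmapE z x w : fm (j z x) w = fm (br x w) z.
Proof.
by rewrite form_riesz // => a y y'; rewrite linear_brr formDl formZl.
Qed.

Lemma linear_jmap z : linear (j z).
Proof.
move=> a x x'; apply: (form_injl G_metric) => w.
by rewrite formDl formZl !jmapE linear_brl formDl formZl.
Qed.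

Lemma linear_jmapl x : linear (j^~ x).
Proof.
move=> a z z'; apply: (form_injl G_metric) => w.
by rewrite formDl formZl !jmapE formDr formZr.
Qed.

Lemma jmap_skew z x y : fm (j z x) y = - fm (j z y) x.
Proof. by rewrite !jmapE br_antisym formNl. Qed.

Lemma jmap_center z c : in_center br c -> j z c = 0.
Proof.
move=> c_center; apply: (form_injl G_metric) => w.
by rewrite jmapE c_center !form0l.
Qed.

Lemma nablaE x y w : fm (nabla br G x y) w =
  2^-1 * (fm (br x y) w - fm (br y w) x + fm (br w x) y).
Proof.
rewrite form_riesz // => a u u'.
by rewrite formDr formZr linear_brr linear_brl !(formDl, formZl); ring.
Qed.

Lemma nabla_central z y : in_center br z -> nabla br G z y = - 2^-1 *: j z y.
Proof.
move=> z_center; apply: (form_injl G_metric) => w.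
by rewrite nablaE z_center (in_center_r z_center) !form0l formZl -jmapE; ring.
Qed.

Lemma form_nabla_central x y z : in_center br z ->
  fm (nabla br G x y) z = 2^-1 * fm (j z x) y.
Proof.
move=> z_center.
by rewrite nablaE z_center (in_center_r z_center) !form0l jmapE; ring.
Qed.

Lemma form_curv_central z x : in_center br z ->
  fm (curv br G z x x) z = 4^-1 * fm (j z x) (j z x).
Proof.
move=> z_center; rewrite /curv !formBl !form_nabla_central //.
rewrite z_center (jmap_center z z_center) linear_fun0; last exact: linear_jmap.
rewrite (nabla_central x z_center) formZr !form0l.
have -> : (4 : R) = 2 * 2 by rewrite -natrM.
by rewrite invfM; ring.
Qed.

Lemma sec_curv_semicentral z x : in_center br z -> in_v br G x ->
  sec_curv br G z x = 4^-1 * fm (j z x) (j z x) / (fm z z * fm x x).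
Proof.
move=> z_center x_v.
by rewrite /sec_curv form_curv_central // (formC G_metric z) (x_v z) // expr0n subr0.
Qed.

End LieAlgebra.

Section SemicentralCurvature.
Variables (R : realType) (n : nat) (br : 'rV[R]_n -> 'rV[R]_n -> 'rV[R]_n).
Variable G : 'M[R]_n.
Hypotheses (br_lie : lie_bracket br) (G_metric : pseudo_metric G).
Local Notation fm := (Defs.form G).
Local Notation j := (jmap br G).

Lemma pseudo_H_type_norm_jmap z x : pseudo_H_type br G ->
  in_center br z -> in_v br G x -> fm (j z x) (j z x) = fm z z * fm x x.
Proof.
by move=> H_type zc xv; rewrite jmap_skew // H_type // formZl mulNr opprK.
Qed.

Lemma semicentral_curv_quarter_of_pseudo_H_type :
  pseudo_H_type br G -> semicentral_curv_quarter br G.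
Proof.
move=> H_type z x zc xv _; rewrite (formC G_metric z) (xv z zc) expr0n subr0 => D_neq0.
by rewrite sec_curv_semicentral // pseudo_H_type_norm_jmap // mulfK.
Qed.

Lemma nonnull_norm_jmap_of_curv_quarter z x : semicentral_curv_quarter br G ->
  in_center br z -> in_v br G x -> fm z z != 0 -> fm x x != 0 ->
  fm (j z x) (j z x) = fm z z * fm x x.
Proof.
move=> quarter zc xv zz_neq0 xx_neq0.
have zx0 : fm z x = 0 by rewrite (formC G_metric); apply: xv.
have D_neq0 : fm z z * fm x x - fm z x ^+ 2 != 0 by rewrite zx0 expr0n subr0 mulf_neq0.
have := quarter z x zc xv (orthogonal_lin_indep2 G_metric zx0 zz_neq0 xx_neq0) D_neq0.
rewrite sec_curv_semicentral // -mulrA -[RHS]mulr1 => /mulfI /divr1_eq; apply.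
by rewrite invr_eq0 pnatr_eq0.
Qed.

Hypothesis center_nondeg : center_nondegenerate br G.

Lemma v_nondegenerate : nondegenerate_on G (in_v br G).
Proof.
move=> x xv x_orth; apply: (form_eq0 G_metric) => w.
have [c cc wc_v] := center_v_decomposition br_lie center_nondeg w.
by rewrite -(subrK c w) formDr x_orth // xv // addr0.
Qed.

Lemma norm_jmap_of_curv_quarter z x : semicentral_curv_quarter br G ->
  in_center br z -> in_v br G x -> fm (j z x) (j z x) = fm z z * fm x x.
Proof.
move=> quarter zc xv.
have nonnull_z z' : in_center br z' -> fm z' z' != 0 ->
    forall y, in_v br G y -> fm (j z' y) (j z' y) = fm z' z' * fm y y.
  move=> z'c z'_nonnull y yv; apply: (scaled_isometry_of_nonnull G_metric _
    (linear_jmap br_lie G_metric z') v_nondegenerate _ yv) => [|y' y'v].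
    exact: v_subspace.
  exact: nonnull_norm_jmap_of_curv_quarter.
rewrite mulrC; apply: (scaled_isometry_of_nonnull G_metric (center_subspace br_lie)
  (linear_jmapl br_lie G_metric x) center_nondeg _ zc) => z' z'c z'_nonnull.
by rewrite mulrC; apply: nonnull_z.
Qed.

Lemma pseudo_H_type_of_curv_quarter :
  semicentral_curv_quarter br G -> pseudo_H_type br G.
Proof.
move=> quarter z zc x xv; apply: (form_injl G_metric) => w.
have [c cc yv] := center_v_decomposition br_lie center_nondeg w.
rewrite -(subrK c w); move: (w - c) yv => y yv.
have j_polar : fm (j z y) (j z x) = fm z z * fm y x.
  apply: (scaled_isometry_polarize G_metric _ (linear_jmap br_lie G_metric z) _ yv xv).
    exact: v_subspace.
  by move=> y' y'v; apply: norm_jmap_of_curv_quarter.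
rewrite !formDr !(jmap_skew br_lie G_metric z (j z x)) j_polar jmap_center //.
by rewrite form0l !formZl (xv c cc) (formC G_metric x); ring.
Qed.

End SemicentralCurvature.

Theorem corollary4p9 (R : realType) (n : nat) (br : 'rV[R]_n -> 'rV[R]_n -> 'rV[R]_n)
    (G : 'M[R]_n) :
  lie_bracket br -> two_step_nilpotent br -> pseudo_metric G ->
  center_nondegenerate br G ->
  (pseudo_H_type br G <-> semicentral_curv_quarter br G).
Proof.
(* Only the centrality of z enters the curvature of a semi-central plane. *)
move=> br_lie _ G_metric center_nondeg; split.
  exact: semicentral_curv_quarter_of_pseudo_H_type.
exact: pseudo_H_type_of_curv_quarter.
Qed.
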